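(* For every $t\in\mathtt T_J$: $t$ is strongly normalizing for $\to_{d\beta}$ if and only if $t$ is strongly normalizing for $\to_\beta\cup\to_\pi$.
   Context: Terms $\mathtt T_J$: $t,u,r ::= x \mid \lambda x.t \mid t(u,y.r)$ ($y$ bound in $r$), up to $\alpha$-equivalence; $\{u/x\}t$ capture-avoiding substitution. List contexts $\mathtt D ::= \Diamond \mid t(u,y.\mathtt D)$. Distant beta: $\mathtt D\langle\lambda x.t\rangle(u,y.r) \mapsto_{d\beta} \{\{u/x\}\mathtt D\langle t\rangle/y\}r$ (variables bound by $\mathtt D$ not free in $u$, $x$ not in $\mathtt D$). Rules of $\Lambda J$: $\beta$: $(\lambda x.t)(u,y.r)\mapsto\{\{u/x\}t/y\}r$; $\pi$: $t(u,x.r)(u',y.r')\mapsto t(u,x.r(u',y.r'))$ (with $x\notin\mathrm{fv}(u')\cup\mathrm{fv}(r')$). Each of $\to_{d\beta},\to_\beta,\to_\pi$ is the closure of the corresponding rule under all term contexts. A term is strongly normalizing for a relation if it admits no infinite reduction sequence. *)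

(* Terms of Lambda-J up to alpha-equivalence, represented with
   de Bruijn indices (which are canonical representatives of alpha-classes). *)
From Stdlib Require Import Arith List.
Import ListNotations.

(* t ::= x | \x.t | t(u, y.r)   -- in [App t u r], [r] binds one variable (index 0) *)
Inductive term : Type :=
| Var : nat -> term
| Lam : term -> term
| App : term -> term -> term -> term.

Fixpoint lift (k c : nat) (t : term) : term :=
  match t with
  | Var n => if n <? c then Var n else Var (n + k)
  | Lam b => Lam (lift k (S c) b)
  | App a u r => App (lift k c a) (lift k c u) (lift k (S c) r)
  end.

Fixpoint substAt (c : nat) (s : term) (t : term) : term :=
  match t with
  | Var n => if n <? c then Var n
             else if n =? c then lift c 0 s
             else Var (n - 1)
  | Lam b => Lam (substAt (S c) s b)
  | App a u r => App (substAt c s a) (substAt c s u) (substAt (S c) s r)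
  end.

Definition subst0 (s t : term) : term := substAt 0 s t.

(* list contexts D ::= <> | t(u, y.D), as the list of pairs (t,u) from outside in *)
Definition lctx := list (term * term).

Fixpoint plug (D : lctx) (s : term) : term :=
  match D with
  | [] => s
  | (a, u) :: D' => App a u (plug D' s)
  end.

(* distant beta: D<\x.t>(u, y.r) -> {{u/x} D<t> / y} r ; u is lifted under the
   binders of D (the named side condition that D's bound vars are not free in u) *)
Inductive dbeta_root : term -> term -> Prop :=
| dbeta_rule : forall D t u r,
    dbeta_root (App (plug D (Lam t)) u r)
               (subst0 (plug D (subst0 (lift (length D) 0 u) t)) r).

Inductive beta_root : term -> term -> Prop :=
| beta_rule : forall t u r,
    beta_root (App (Lam t) u r) (subst0 (subst0 u t) r).

(* pi: t(u, x.r)(u', y.r') -> t(u, x. r(u', y.r')) ; x not free in u', r' *)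
Inductive pi_root : term -> term -> Prop :=
| pi_rule : forall t u r u' r',
    pi_root (App (App t u r) u' r')
            (App t u (App r (lift 1 0 u') (lift 1 1 r'))).

Inductive ctx_closure (R : term -> term -> Prop) : term -> term -> Prop :=
| cc_root : forall a b, R a b -> ctx_closure R a b
| cc_lam : forall a b, ctx_closure R a b -> ctx_closure R (Lam a) (Lam b)
| cc_app1 : forall a b u r, ctx_closure R a b -> ctx_closure R (App a u r) (App b u r)
| cc_app2 : forall t a b r, ctx_closure R a b -> ctx_closure R (App t a r) (App t b r)
| cc_app3 : forall t u a b, ctx_closure R a b -> ctx_closure R (App t u a) (App t u b).

Definition dbeta_step := ctx_closure dbeta_root.
Definition beta_step := ctx_closure beta_root.
Definition pi_step := ctx_closure pi_root.

Definition union_rel (R S : term -> term -> Prop) : term -> term -> Prop :=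
  fun a b => R a b \/ S a b.

Definition SN (R : term -> term -> Prop) (t : term) : Prop :=
  ~ (exists f : nat -> term, f 0 = t /\ forall n, R (f n) (f (S n))).

(* Both strong normalisation properties are characterised by typability in a
   non-idempotent intersection type system for Lambda-J whose derivations
   carry a weight.  A dbeta- or beta-step strictly decreases the weight of a
   derivation and a pi-step does not increase it while decreasing the size
   measure [pi_weight], so typable terms are strongly normalising for both
   relations.  Conversely, the strongly normalising terms of either relation
   admit an inductive description, and subject expansion for the root rules
   (for dbeta: expansion in head position only) turns this description into a
   typing derivation. *)

From Stdlib Require Import Arith Lia List Permutation FunctionalExtensionality
  ClassicalEpsilon Relations Wellfounded.
Import ListNotations.

(** * Types and multiset contexts *)

(* Lists of types stand for multisets: every statement about them is invariant
   under [Permutation].  A context maps each de Bruijn index to a multiset. *)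
Inductive ty : Type := Tbase : ty | Tarr : list ty -> ty -> ty.

Definition ty_eq_dec (x y : ty) : {x = y} + {x <> y} := excluded_middle_informative (x = y).

Definition ctx := nat -> list ty.
Definition cempty : ctx := fun _ => [].
Definition cadd (G H : ctx) : ctx := fun i => G i ++ H i.
Definition csing (x : nat) (s : ty) : ctx := fun i => if i =? x then [s] else [].
Definition cpop (G : ctx) : ctx := fun i => G (S i).
Definition cdrop (c : nat) (G : ctx) : ctx := fun i => if i <? c then G i else G (S i).
Definition clift (k c : nat) (G : ctx) : ctx :=
  fun i => if i <? c then G i else if i <? c + k then [] else G (i - k).
Definition cvar0 (J : list ty) : ctx := fun i => if i =? 0 then J else [].
Definition cperm (G H : ctx) := forall i, Permutation (G i) (H i).
Definition csub (G H : ctx) := exists K, cperm (cadd G K) H.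
Definition msub (L L' : list ty) := exists K, Permutation (L ++ K) L'.

Ltac perm_count :=
  repeat match goal with
  | H : Permutation _ _ |- _ =>
      let H' := fresh "HC" in
      pose proof (proj1 (Permutation_count_occ ty_eq_dec _ _) H) as H'; clear H
  end;
  apply (proj2 (Permutation_count_occ ty_eq_dec _ _));
  let z := fresh "z" in intro z;
  repeat match goal with
  | H : forall x : ty, _ |- _ => specialize (H z)
  end;
  repeat rewrite count_occ_app in *; lia.

Ltac cperm_pointwise := unfold cperm, cadd, cempty, cpop in *; let i := fresh "i" in intro i;
  repeat match goal with
  | H : forall j : nat, Permutation _ _ |- _ => specialize (H i)
  end.

Ltac ctx_ext := apply functional_extensionality; let i := fresh "i" in intro i;
  unfold cadd, csing, cpop, cdrop, clift, cvar0, cempty;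
  repeat match goal with
   | |- context [?a <? ?b] => destruct (Nat.ltb_spec a b)
   | |- context [?a =? ?b] => destruct (Nat.eqb_spec a b)
  end; try (exfalso; lia); try reflexivity; try (f_equal; lia); try (subst; reflexivity).

Lemma cperm_refl G : cperm G G. Proof. intro; apply Permutation_refl. Qed.
Lemma cperm_sym G H : cperm G H -> cperm H G. Proof. intros E i; apply Permutation_sym, E. Qed.
Lemma cperm_trans G H I : cperm G H -> cperm H I -> cperm G I.
Proof. intros E F i; eapply perm_trans; [apply E|apply F]. Qed.
Lemma cperm_cadd G H G' H' : cperm G G' -> cperm H H' -> cperm (cadd G H) (cadd G' H').
Proof. intros; cperm_pointwise; perm_count. Qed.
Lemma cperm_caddA G H I : cperm (cadd G (cadd H I)) (cadd (cadd G H) I).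
Proof. cperm_pointwise; perm_count. Qed.

Lemma csub_refl G : csub G G.
Proof. exists cempty. cperm_pointwise. rewrite app_nil_r. apply Permutation_refl. Qed.
Lemma csub_trans G H I : csub G H -> csub H I -> csub G I.
Proof. intros [K1 E1] [K2 E2]. exists (cadd K1 K2). cperm_pointwise. perm_count. Qed.
Lemma csub_cperm G H : cperm G H -> csub G H.
Proof. intros E; exists cempty; cperm_pointwise; rewrite app_nil_r; auto. Qed.
Lemma csub_cperm_r G H H' : csub G H -> cperm H H' -> csub G H'.
Proof. intros S E; eapply csub_trans; [exact S| apply csub_cperm; exact E]. Qed.
Lemma csub_caddr G K : csub G (cadd G K).
Proof. exists K; apply cperm_refl. Qed.
Lemma csub_cadd G H G' H' : csub G G' -> csub H H' -> csub (cadd G H) (cadd G' H').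
Proof. intros [K1 E1] [K2 E2]; exists (cadd K1 K2); cperm_pointwise; perm_count. Qed.
Lemma csub_msub_at G H i : csub G H -> msub (G i) (H i).
Proof. intros [K E]; exists (K i); apply E. Qed.

Lemma msub_refl L : msub L L. Proof. exists []; rewrite app_nil_r; apply Permutation_refl. Qed.
Lemma msub_app_l L L' : msub L (L ++ L'). Proof. exists L'; apply Permutation_refl. Qed.
Lemma msub_app_r L L' : msub L' (L ++ L'). Proof. exists L; apply Permutation_app_comm. Qed.
Lemma msub_trans a b c : msub a b -> msub b c -> msub a c.
Proof. intros [K1 P1] [K2 P2]; exists (K1 ++ K2). perm_count. Qed.
Lemma msub_perm a b c : msub a b -> Permutation b c -> msub a c.
Proof. intros [K1 P1] P2; exists K1; eapply perm_trans; eauto. Qed.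

Lemma cadd_cempty_l G : cadd cempty G = G. Proof. reflexivity. Qed.
Lemma cadd_cempty_r G : cadd G cempty = G.
Proof. ctx_ext; apply app_nil_r. Qed.
Lemma cpop_cadd G H : cpop (cadd G H) = cadd (cpop G) (cpop H).
Proof. reflexivity. Qed.
Lemma clift_csing k c x s : clift k c (csing x s) = csing (if x <? c then x else x + k) s.
Proof. destruct (Nat.ltb_spec x c); ctx_ext. Qed.
Lemma clift_cadd k c G H : clift k c (cadd G H) = cadd (clift k c G) (clift k c H).
Proof. ctx_ext. Qed.
Lemma clift_cempty k c : clift k c cempty = cempty.
Proof. ctx_ext. Qed.
Lemma clift00 D : clift 0 0 D = D.
Proof. ctx_ext. Qed.
Lemma cpop_clift k c G : cpop (clift k (S c) G) = clift k c (cpop G).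
Proof. ctx_ext. Qed.
Lemma cpop_clift0 c D : cpop (clift (S c) 0 D) = clift c 0 D.
Proof. ctx_ext. Qed.
Lemma cpop_clift1 D : cpop (clift 1 0 D) = D.
Proof. ctx_ext. Qed.
Lemma cpop_cpop_clift11 D : cpop (cpop (clift 1 1 D)) = cpop D.
Proof. ctx_ext. Qed.
Lemma cdrop0 G : cdrop 0 G = cpop G.
Proof. ctx_ext. Qed.
Lemma cdrop_cadd c G H : cdrop c (cadd G H) = cadd (cdrop c G) (cdrop c H).
Proof. ctx_ext. Qed.
Lemma cdrop_cempty c : cdrop c cempty = cempty.
Proof. ctx_ext. Qed.
Lemma cdrop_csing_eq c s : cdrop c (csing c s) = cempty.
Proof. ctx_ext. Qed.
Lemma cdrop_csing_lt c x s : x < c -> cdrop c (csing x s) = csing x s.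
Proof. intros; ctx_ext. Qed.
Lemma cdrop_csing_gt c x s : c < x -> cdrop c (csing x s) = csing (x - 1) s.
Proof. intros; ctx_ext. Qed.
Lemma cpop_cdrop c G : cpop (cdrop (S c) G) = cdrop c (cpop G).
Proof. ctx_ext. Qed.
Lemma cpop_cvar0 J : cpop (cvar0 J) = cempty.
Proof. ctx_ext. Qed.
Lemma cadd_cvar0_0 G J : cadd G (cvar0 J) 0 = G 0 ++ J.
Proof. reflexivity. Qed.
Lemma cadd_cvar0_S G J c : cadd G (cvar0 J) (S c) = G (S c).
Proof. unfold cadd, cvar0; simpl; apply app_nil_r. Qed.
Lemma cpop_cadd_cvar0 G J : cpop (cadd G (cvar0 J)) = cpop G.
Proof. rewrite cpop_cadd, cpop_cvar0, cadd_cempty_r; auto. Qed.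

Lemma cperm_clift k c G H : cperm G H -> cperm (clift k c G) (clift k c H).
Proof. intros E i; unfold clift; destruct (i <? c); [apply E|destruct (i <? c + k); auto]. Qed.
Lemma cperm_cdrop c G H : cperm G H -> cperm (cdrop c G) (cdrop c H).
Proof. intros E i; unfold cdrop; destruct (i <? c); apply E. Qed.
Lemma csub_clift k c G H : csub G H -> csub (clift k c G) (clift k c H).
Proof. intros [K E]; exists (clift k c K); rewrite <- clift_cadd; apply cperm_clift; auto. Qed.
Lemma csub_cdrop c G H : csub G H -> csub (cdrop c G) (cdrop c H).
Proof. intros [K E]; exists (cdrop c K); rewrite <- cdrop_cadd; apply cperm_cdrop; auto. Qed.
Lemma csub_cpop G H : csub G H -> csub (cpop G) (cpop H).
Proof. intros [K E]; exists (cpop K); intro i; apply E. Qed.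

(** * The type system *)

Definition arrow (p : list ty * ty) : ty := Tarr (fst p) (snd p).

(* Side condition of the application rule for [t(u, y.r)], with [t : A],
   [u : B] and [y : Y] in the typing of [r]: the expected
   [A = [M_i -> tau_i]], [Y = [tau_i]], [B = M_1 + ... + M_k], except that
   [B] is one arbitrary type when all [M_i] are empty, and [A], [B] are one
   arbitrary type each when [Y] is empty.  Thus [t] and [u] are always typed,
   as strong normalisation requires of subterms that may be erased. *)
Definition app_ok (A B Y : list ty) : Prop :=
  (Y <> [] /\ exists ps, Permutation (map snd ps) Y /\ Permutation A (map arrow ps) /\
     ((flat_map fst ps <> [] /\ Permutation B (flat_map fst ps)) \/
      (flat_map fst ps = [] /\ length B = 1)))
  \/ (Y = [] /\ length A = 1 /\ length B = 1).

(* [typed G t s n]: [G |- t : s] by a derivation of weight [n];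
   [mtyped G t A n]: the multiset [A] is derivable for [t], with total weight [n]. *)
Inductive typed : ctx -> term -> ty -> nat -> Prop :=
| typed_var x s : typed (csing x s) (Var x) s 1
| typed_lam G t s M n : typed G t s n -> Permutation M (G 0) -> typed (cpop G) (Lam t) (Tarr M s) (S n)
| typed_app G1 G2 G3 t u r A B s n1 n2 n3 :
    mtyped G1 t A n1 -> mtyped G2 u B n2 -> typed G3 r s n3 -> app_ok A B (G3 0) ->
    typed (cadd G1 (cadd G2 (cpop G3))) (App t u r) s (S (n1 + n2 + n3))
| typed_weak G G' t s n : typed G t s n -> csub G G' -> typed G' t s n
with mtyped : ctx -> term -> list ty -> nat -> Prop :=
| mtyped_nil t : mtyped cempty t [] 0
| mtyped_cons G G1 G2 t s A n1 n2 : typed G1 t s n1 -> mtyped G2 t A n2 -> cperm (cadd G1 G2) G ->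
    mtyped G t (s :: A) (n1 + n2).

Scheme typed_ind2 := Induction for typed Sort Prop with mtyped_ind2 := Induction for mtyped Sort Prop.
Combined Scheme typed_mutind from typed_ind2, mtyped_ind2.

Definition typable t := exists G s n, typed G t s n.

Lemma app_ok_perm A B Y A' B' Y' : app_ok A B Y -> Permutation A A' -> Permutation B B' ->
  Permutation Y Y' -> app_ok A' B' Y'.
Proof.
  intros [[HY [ps [H1 [H2 H3]]]]|[HY [HA HB]]] PA PB PY.
  - left. split.
    + intro E; subst; apply Permutation_sym, Permutation_nil in PY; auto.
    + exists ps; split; [eapply perm_trans; eauto|]. split; [eapply perm_trans; [apply Permutation_sym; eauto|eauto]|].
      destruct H3 as [[? ?]|[? ?]]; [left; split; auto; eapply perm_trans; [apply Permutation_sym; eauto|eauto]|right; split; auto].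
      rewrite <- (Permutation_length PB); auto.
  - right. subst. apply Permutation_nil in PY. subst. split; auto.
    rewrite <- (Permutation_length PA), <- (Permutation_length PB); auto.
Qed.

Lemma app_ok_nonempty A B Y : app_ok A B Y -> A <> [] /\ B <> [].
Proof.
  intros [[HY [ps [H1 [H2 H3]]]]|[HY [HA HB]]].
  - assert (ps <> []) by (intro; subst; simpl in H1; apply Permutation_nil in H1; auto).
    split.
    + intro; subst. apply Permutation_nil in H2. destruct ps; simpl in *; congruence.
    + destruct H3 as [[? ?]|[? ?]]; intro; subst.
      * apply Permutation_nil in H3; auto.
      * simpl in *; lia.
  - split; intro; subst; simpl in *; lia.
Qed.

Lemma typed_cperm G G' t s n : typed G t s n -> cperm G G' -> typed G' t s n.
Proof. intros H E; eapply typed_weak; [exact H| apply csub_cperm; auto]. Qed.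

Lemma typed_cadd_cvar0 G J t s n : typed G t s n -> typed (cadd G (cvar0 J)) t s n.
Proof. intros H; eapply typed_weak; [exact H|apply csub_caddr]. Qed.

Lemma mtyped_nil_inv G t n : mtyped G t [] n -> G = cempty /\ n = 0.
Proof. intros H; inversion H; auto. Qed.

Lemma mtyped_cons_inv G t s A n : mtyped G t (s :: A) n ->
  exists G1 G2 n1 n2, typed G1 t s n1 /\ mtyped G2 t A n2 /\ cperm (cadd G1 G2) G /\ n = n1 + n2.
Proof. intros H; inversion H; subst; do 4 eexists; eauto. Qed.

Lemma mtyped_single G t s n : typed G t s n -> mtyped G t [s] n.
Proof.
  intros H. rewrite <- (Nat.add_0_r n). eapply mtyped_cons; [exact H|constructor|].
  rewrite cadd_cempty_r; apply cperm_refl.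
Qed.

Lemma mtyped_single_inv G t s n : mtyped G t [s] n -> typed G t s n.
Proof.
  intros H; apply mtyped_cons_inv in H as (G1&G2&n1&n2&H1&H2&E&->).
  apply mtyped_nil_inv in H2 as [-> ->]. rewrite cadd_cempty_r in E. rewrite Nat.add_0_r.
  eapply typed_cperm; eauto.
Qed.

Lemma mtyped_app G1 G2 t A1 A2 n1 n2 :
  mtyped G1 t A1 n1 -> mtyped G2 t A2 n2 -> mtyped (cadd G1 G2) t (A1 ++ A2) (n1 + n2).
Proof.
  revert G1 n1; induction A1 as [|s A1 IH]; intros G1 n1 H1 H2.
  - apply mtyped_nil_inv in H1 as [-> ->]; simpl; auto.
  - apply mtyped_cons_inv in H1 as (Ga&Gb&na&nb&Ha&Hb&E&->).
    rewrite <- Nat.add_assoc. eapply mtyped_cons; [exact Ha| apply (IH _ _ Hb H2)|].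
    apply cperm_trans with (cadd (cadd Ga Gb) G2); [apply cperm_caddA| apply cperm_cadd; auto; apply cperm_refl].
Qed.

Lemma mtyped_split G t A1 A2 n : mtyped G t (A1 ++ A2) n ->
  exists G1 G2 n1 n2, mtyped G1 t A1 n1 /\ mtyped G2 t A2 n2 /\ cperm (cadd G1 G2) G /\ n = n1 + n2.
Proof.
  revert G n; induction A1 as [|s A1 IH]; intros G n H.
  - exists cempty, G, 0, n. repeat split; auto. constructor. apply cperm_refl.
  - simpl in H. apply mtyped_cons_inv in H as (Ga&Gb&na&nb&Ha&Hb&E&->).
    apply IH in Hb as (G1&G2&n1&n2&H1&H2&E2&->).
    exists (cadd Ga G1), G2, (na + n1), n2. repeat split; [|exact H2| |lia].
    + eapply mtyped_cons; eauto. apply cperm_refl.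
    + eapply cperm_trans; [|exact E]. eapply cperm_trans; [apply cperm_sym, cperm_caddA|].
      apply cperm_cadd; auto. apply cperm_refl.
Qed.

Lemma mtyped_perm G t A A' n : mtyped G t A n -> Permutation A A' -> mtyped G t A' n.
Proof.
  intros H P; revert G n H; induction P; intros G n H.
  - auto.
  - apply mtyped_cons_inv in H as (Ga&Gb&na&nb&Ha&Hb&E&->). eapply mtyped_cons; eauto.
  - apply mtyped_cons_inv in H as (Ga&Gb&na&nb&Ha&Hb&E&->).
    apply mtyped_cons_inv in Hb as (Gc&Gd&nc&nd&Hc&Hd&E2&->).
    replace (na + (nc + nd)) with (nc + (na + nd)) by lia.
    eapply mtyped_cons; [exact Hc| eapply mtyped_cons; [exact Ha|exact Hd|apply cperm_refl]|].
    cperm_pointwise. perm_count.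
  - eauto.
Qed.

Lemma mtyped_msub G t A A' n : mtyped G t A n -> msub A' A ->
  exists G' n', mtyped G' t A' n' /\ csub G' G /\ n' <= n.
Proof.
  intros H [K P]. apply mtyped_perm with (A' := A' ++ K) in H; [|apply Permutation_sym; auto].
  apply mtyped_split in H as (G1&G2&n1&n2&H1&H2&E&->). exists G1, n1; repeat split; auto; [|lia].
  exists G2; auto.
Qed.

Lemma mtyped_in G t A n s : mtyped G t A n -> In s A -> exists G' n', typed G' t s n'.
Proof.
  intros H Hin; apply in_split in Hin as (l1&l2&->).
  apply mtyped_split in H as (G1&G2&n1&n2&H1&H2&E&->).
  apply mtyped_cons_inv in H2 as (Ga&Gb&na&nb&Ha&_). eauto.
Qed.

Lemma typed_var_inv G x s n : typed G (Var x) s n -> n = 1 /\ csub (csing x s) G.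
Proof.
  intros H; remember (Var x) as t; induction H; try discriminate.
  - injection Heqt; intros; subst; split; auto; apply csub_refl.
  - destruct (IHtyped Heqt) as [? ?]; split; auto; eapply csub_trans; eauto.
Qed.

Lemma typed_lam_inv G t T n : typed G (Lam t) T n -> exists G0 M s n0, T = Tarr M s /\ n = S n0 /\
  typed G0 t s n0 /\ Permutation M (G0 0) /\ csub (cpop G0) G.
Proof.
  intros H; remember (Lam t) as t0; induction H; try discriminate.
  - injection Heqt0; intros; subst. do 4 eexists; repeat split; eauto. apply csub_refl.
  - destruct (IHtyped Heqt0) as (G0&M&s0&n0&?&?&?&?&?). do 4 eexists; repeat split; eauto.
    eapply csub_trans; eauto.
Qed.

Lemma typed_app_inv G t u r s n : typed G (App t u r) s n -> exists G1 G2 G3 A B n1 n2 n3,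
  mtyped G1 t A n1 /\ mtyped G2 u B n2 /\ typed G3 r s n3 /\ app_ok A B (G3 0) /\ n = S (n1 + n2 + n3) /\
  csub (cadd G1 (cadd G2 (cpop G3))) G.
Proof.
  intros H; remember (App t u r) as t0; induction H; try discriminate.
  - injection Heqt0; intros; subst. do 8 eexists; repeat split; eauto. apply csub_refl.
  - destruct (IHtyped Heqt0) as (G1&G2&G3&A&B&n1&n2&n3&?&?&?&?&?&?). do 8 eexists; repeat split; eauto.
    eapply csub_trans; eauto.
Qed.

(** * Lifting and substitution *)

Lemma lift_0 t c : lift 0 c t = t.
Proof.
  revert c; induction t; intros; simpl; try (rewrite ?IHt, ?IHt1, ?IHt2, ?IHt3; auto; fail).
  destruct (n <? c); try reflexivity; f_equal; lia.
Qed.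

Lemma lift_lift t a b c : lift a c (lift b c t) = lift (a + b) c t.
Proof.
  revert c; induction t; intros; simpl; try (rewrite ?IHt, ?IHt1, ?IHt2, ?IHt3; auto; fail).
  destruct (Nat.ltb_spec n c); simpl.
  - destruct (Nat.ltb_spec n c); [auto|lia].
  - destruct (Nat.ltb_spec (n + b) c); [lia|]. f_equal; lia.
Qed.

Lemma typed_lift :
  (forall G t s n, typed G t s n -> forall k c, typed (clift k c G) (lift k c t) s n) /\
  (forall G t A n, mtyped G t A n -> forall k c, mtyped (clift k c G) (lift k c t) A n).
Proof.
  apply typed_mutind; intros.
  - simpl. rewrite clift_csing. destruct (x <? c); constructor.
  - simpl. rewrite <- cpop_clift. apply typed_lam; auto.
  - simpl. rewrite !clift_cadd, <- cpop_clift. apply typed_app with (A := A) (B := B); auto.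
  - eapply typed_weak; eauto. apply csub_clift; auto.
  - rewrite clift_cempty. constructor.
  - eapply mtyped_cons; eauto. rewrite <- clift_cadd. apply cperm_clift; auto.
Qed.

Lemma typed_substAt_var c X x s D m : mtyped D X (csing x s c) m ->
  exists n', n' <= 1 + m /\ typed (cadd (cdrop c (csing x s)) (clift c 0 D)) (substAt c X (Var x)) s n'.
Proof.
  intros HX; simpl; unfold csing at 1 in HX.
  destruct (Nat.ltb_spec x c); [|destruct (Nat.eqb_spec x c)].
  - destruct (Nat.eqb_spec c x); [lia|]. apply mtyped_nil_inv in HX as [-> ->].
    rewrite cdrop_csing_lt, clift_cempty, cadd_cempty_r by auto. exists 1; split; [lia|constructor].
  - subst. rewrite Nat.eqb_refl in HX. apply mtyped_single_inv in HX.
    rewrite cdrop_csing_eq, cadd_cempty_l. exists m; split; [lia|]. apply typed_lift; auto.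
  - destruct (Nat.eqb_spec c x); [lia|]. apply mtyped_nil_inv in HX as [-> ->].
    rewrite cdrop_csing_gt, clift_cempty, cadd_cempty_r by lia. exists 1; split; [lia|constructor].
Qed.

Lemma typed_subst :
  (forall G t s n, typed G t s n -> forall c X D m, mtyped D X (G c) m ->
     exists n', n' <= n + m /\ typed (cadd (cdrop c G) (clift c 0 D)) (substAt c X t) s n') /\
  (forall G t A n, mtyped G t A n -> forall c X D m, mtyped D X (G c) m ->
     exists n', n' <= n + m /\ mtyped (cadd (cdrop c G) (clift c 0 D)) (substAt c X t) A n').
Proof.
  apply typed_mutind.
  - intros x s c X D m HX. apply typed_substAt_var; auto.
  - intros G t s M n _ IH P c X D m HX; simpl.
    destruct (IH (S c) X D m HX) as (n'&Hle&Ht).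
    exists (S n'); split; [lia|].
    replace (cadd (cdrop c (cpop G)) (clift c 0 D)) with (cpop (cadd (cdrop (S c) G) (clift (S c) 0 D)))
      by (rewrite cpop_cadd, cpop_cdrop, cpop_clift0; reflexivity).
    apply typed_lam; auto. cbn. rewrite app_nil_r. exact P.
  - intros G1 G2 G3 t u r A B s n1 n2 n3 _ IHt _ IHu _ IHr Ok c X D m HX; simpl.
    change (cadd G1 (cadd G2 (cpop G3)) c) with (G1 c ++ (G2 c ++ G3 (S c))) in HX.
    apply mtyped_split in HX as (D1&D'&m1&m'&HD1&HD'&E1&->).
    apply mtyped_split in HD' as (D2&D3&m2&m3&HD2&HD3&E2&->).
    destruct (IHt c X D1 m1 HD1) as (k1&L1&T1), (IHu c X D2 m2 HD2) as (k2&L2&T2),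
      (IHr (S c) X D3 m3 HD3) as (k3&L3&T3).
    exists (S (k1 + k2 + k3)); split; [lia|].
    eapply typed_cperm; [apply typed_app with (A := A) (B := B); eauto|].
    + eapply app_ok_perm; eauto. cbn. rewrite app_nil_r. apply Permutation_refl.
    + rewrite !cdrop_cadd, cpop_cadd, cpop_cdrop, cpop_clift0.
      assert (E : cperm (cadd D1 (cadd D2 D3)) D)
        by (eapply cperm_trans; [|exact E1]; apply cperm_cadd; auto; apply cperm_refl).
      apply (cperm_clift c 0) in E. rewrite !clift_cadd in E.
      cperm_pointwise. perm_count.
  - intros G G' t s n _ IH Hs c X D m HX.
    destruct (mtyped_msub _ _ _ _ _ HX (csub_msub_at _ _ c Hs)) as (D'&m'&HD&SD&Le).
    destruct (IH c X D' m' HD) as (n'&Ln&T).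
    exists n'; split; [lia|]. eapply typed_weak; [exact T|].
    apply csub_cadd; [apply csub_cdrop; auto| apply csub_clift; auto].
  - intros t c X D m HX.
    apply mtyped_nil_inv in HX as [-> ->]. rewrite cdrop_cempty, clift_cempty.
    exists 0; split; [lia|constructor].
  - intros G G1 G2 t s A n1 n2 _ IH1 _ IH2 E c X D m HX.
    apply mtyped_perm with (A' := G1 c ++ G2 c) in HX; [|apply Permutation_sym, E].
    apply mtyped_split in HX as (Da&Db&ma&mb&Ha&Hb&ED&->).
    destruct (IH1 c X Da ma Ha) as (k1&L1&T1).
    destruct (IH2 c X Db mb Hb) as (k2&L2&T2).
    exists (k1 + k2); split; [lia|]. eapply mtyped_cons; eauto.
    apply (cperm_cdrop c) in E. rewrite cdrop_cadd in E.
    apply (cperm_clift c 0) in ED. rewrite clift_cadd in ED.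
    cperm_pointwise. perm_count.
Qed.

Lemma mtyped_lift_inv_of k c t :
  (forall G s n, typed G (lift k c t) s n -> exists G0, typed G0 t s n /\ csub (clift k c G0) G) ->
  forall A G n, mtyped G (lift k c t) A n -> exists G0, mtyped G0 t A n /\ csub (clift k c G0) G.
Proof.
  intros IH A; induction A as [|s A IHA]; intros G n H.
  - apply mtyped_nil_inv in H as [-> ->]. exists cempty; split; [constructor|].
    rewrite clift_cempty; apply csub_refl.
  - apply mtyped_cons_inv in H as (G1&G2&n1&n2&H1&H2&E&->).
    destruct (IH _ _ _ H1) as (Ga&Ta&Sa). destruct (IHA _ _ H2) as (Gb&Tb&Sb).
    exists (cadd Ga Gb); split; [eapply mtyped_cons; eauto; apply cperm_refl|].
    rewrite clift_cadd. eapply csub_cperm_r; [apply csub_cadd; eauto|auto].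
Qed.

Lemma typed_lift_inv t k c G s n : typed G (lift k c t) s n ->
  exists G0, typed G0 t s n /\ csub (clift k c G0) G.
Proof.
  revert k c G s n; induction t as [x|t IH|t IHt u IHu r IHr]; intros k c G s n H.
  - simpl in H. exists (csing x s); split; [|rewrite clift_csing]; destruct (x <? c);
      apply typed_var_inv in H as [-> Hs]; auto; constructor.
  - simpl in H. apply typed_lam_inv in H as (G1&M&s0&n0&->&->&H1&P&Sd).
    destruct (IH _ _ _ _ _ H1) as (G0&T0&S0).
    pose proof (csub_msub_at _ _ 0 S0) as Sub. cbn in Sub. destruct Sub as [J PJ].
    exists (cpop (cadd G0 (cvar0 J))); split.
    + apply typed_lam; [apply typed_cadd_cvar0; auto|].
      rewrite cadd_cvar0_0. eapply perm_trans; [exact P|apply Permutation_sym; auto].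
    + rewrite cpop_cadd_cvar0, <- cpop_clift. eapply csub_trans; [apply csub_cpop; exact S0|auto].
  - simpl in H. apply typed_app_inv in H as (G1&G2&G3&A&B&n1&n2&n3&H1&H2&H3&Ok&->&Sd).
    destruct (mtyped_lift_inv_of _ _ _ (IHt k c) _ _ _ H1) as (Ga&Ta&Sa).
    destruct (mtyped_lift_inv_of _ _ _ (IHu k c) _ _ _ H2) as (Gb&Tb&Sb).
    destruct (IHr _ _ _ _ _ H3) as (Gr&Tr&Sr).
    pose proof (csub_msub_at _ _ 0 Sr) as Sub. cbn in Sub. destruct Sub as [J PJ].
    exists (cadd Ga (cadd Gb (cpop (cadd Gr (cvar0 J))))); split.
    + apply typed_app with (A := A) (B := B); auto. apply typed_cadd_cvar0; auto.
      eapply app_ok_perm; eauto; try apply Permutation_refl.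
      rewrite cadd_cvar0_0; apply Permutation_sym; auto.
    + rewrite cpop_cadd_cvar0, !clift_cadd, <- cpop_clift. eapply csub_trans; [|exact Sd].
      apply csub_cadd; auto. apply csub_cadd; auto. apply csub_cpop; auto.
Qed.

Lemma mtyped_lift_inv k c t A G n : mtyped G (lift k c t) A n ->
  exists G0, mtyped G0 t A n /\ csub (clift k c G0) G.
Proof. apply mtyped_lift_inv_of. intros; eapply typed_lift_inv; eauto. Qed.

Lemma mtyped_subst_inv_of c X t :
  (forall G s n, typed G (substAt c X t) s n -> exists Gt D nt m,
      typed Gt t s nt /\ mtyped D X (Gt c) m /\ csub (cadd (cdrop c Gt) (clift c 0 D)) G) ->
  forall A G n, mtyped G (substAt c X t) A n -> exists Gt D nt m,
      mtyped Gt t A nt /\ mtyped D X (Gt c) m /\ csub (cadd (cdrop c Gt) (clift c 0 D)) G.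
Proof.
  intros IH A; induction A as [|s A IHA]; intros G n H.
  - apply mtyped_nil_inv in H as [-> ->]. exists cempty, cempty, 0, 0; repeat split; try constructor.
    rewrite cdrop_cempty, clift_cempty. apply csub_refl.
  - apply mtyped_cons_inv in H as (G1&G2&n1&n2&H1&H2&E&->).
    destruct (IH _ _ _ H1) as (Ga&Da&na&ma&Ta&Xa&Sa). destruct (IHA _ _ H2) as (Gb&Db&nb&mb&Tb&Xb&Sb).
    exists (cadd Ga Gb), (cadd Da Db), (na + nb), (ma + mb); repeat split.
    + eapply mtyped_cons; eauto; apply cperm_refl.
    + apply mtyped_app; auto.
    + rewrite cdrop_cadd, clift_cadd. eapply csub_cperm_r; [|exact E].
      eapply csub_trans; [|apply csub_cadd; [exact Sa|exact Sb]].
      apply csub_cperm. cperm_pointwise; perm_count.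
Qed.

Lemma typed_substAt_var_inv x c X G s n : typed G (substAt c X (Var x)) s n ->
  exists Gt D nt m, typed Gt (Var x) s nt /\ mtyped D X (Gt c) m /\
    csub (cadd (cdrop c Gt) (clift c 0 D)) G.
Proof.
  intros H; simpl in H. exists (csing x s).
  destruct (Nat.ltb_spec x c); [|destruct (Nat.eqb_spec x c)].
  - apply typed_var_inv in H as [-> Hs]. exists cempty, 1, 0; repeat split; [constructor| |].
    + unfold csing. destruct (Nat.eqb_spec c x); [lia|constructor].
    + rewrite cdrop_csing_lt, clift_cempty, cadd_cempty_r; auto.
  - subst. apply typed_lift_inv in H as (D0&T0&S0). exists D0, 1, n; repeat split; [constructor| |].
    + unfold csing. rewrite Nat.eqb_refl. apply mtyped_single; auto.
    + rewrite cdrop_csing_eq, cadd_cempty_l; auto.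
  - apply typed_var_inv in H as [-> Hs]. exists cempty, 1, 0; repeat split; [constructor| |].
    + unfold csing. destruct (Nat.eqb_spec c x); [lia|constructor].
    + rewrite cdrop_csing_gt, clift_cempty, cadd_cempty_r by lia; auto.
Qed.

Lemma typed_subst_inv t c X G s n : typed G (substAt c X t) s n ->
  exists Gt D nt m, typed Gt t s nt /\ mtyped D X (Gt c) m /\ csub (cadd (cdrop c Gt) (clift c 0 D)) G.
Proof.
  revert c X G s n; induction t as [x|t IH|t IHt u IHu r IHr]; intros c X G s n H.
  - eapply typed_substAt_var_inv; eauto.
  - simpl in H. apply typed_lam_inv in H as (G1&M&s0&n0&->&->&H1&P&Sd).
    destruct (IH _ _ _ _ _ H1) as (Gt&D&nt&m&Tt&XD&St).
    pose proof (csub_msub_at _ _ 0 St) as Sub. cbn in Sub. rewrite app_nil_r in Sub. destruct Sub as [J PJ].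
    exists (cpop (cadd Gt (cvar0 J))), D, (S nt), m; repeat split.
    + apply typed_lam; [apply typed_cadd_cvar0; auto|].
      rewrite cadd_cvar0_0. eapply perm_trans; [exact P|apply Permutation_sym; auto].
    + unfold cpop at 1. rewrite cadd_cvar0_S. auto.
    + rewrite cpop_cadd_cvar0, <- cpop_cdrop, <- cpop_clift0, <- cpop_cadd.
      eapply csub_trans; [apply csub_cpop; exact St|auto].
  - simpl in H. apply typed_app_inv in H as (G1&G2&G3&A&B&n1&n2&n3&H1&H2&H3&Ok&->&Sd).
    destruct (mtyped_subst_inv_of _ _ _ (IHt c X) _ _ _ H1) as (Ga&Da&na&ma&Ta&Xa&Sa).
    destruct (mtyped_subst_inv_of _ _ _ (IHu c X) _ _ _ H2) as (Gb&Db&nb&mb&Tb&Xb&Sb).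
    destruct (IHr _ _ _ _ _ H3) as (Gr&Dr&nr&mr&Tr&Xr&Sr).
    pose proof (csub_msub_at _ _ 0 Sr) as Sub. cbn in Sub. rewrite app_nil_r in Sub. destruct Sub as [J PJ].
    exists (cadd Ga (cadd Gb (cpop (cadd Gr (cvar0 J))))), (cadd Da (cadd Db Dr)),
      (S (na + nb + nr)), (ma + (mb + mr)); repeat split.
    + apply typed_app with (A := A) (B := B); auto. apply typed_cadd_cvar0; auto.
      eapply app_ok_perm; eauto; try apply Permutation_refl.
      rewrite cadd_cvar0_0; apply Permutation_sym; auto.
    + change (mtyped (cadd Da (cadd Db Dr)) X (Ga c ++ (Gb c ++ cadd Gr (cvar0 J) (S c))) (ma + (mb + mr))).
      rewrite cadd_cvar0_S. apply mtyped_app; auto. apply mtyped_app; auto.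
    + rewrite cpop_cadd_cvar0. eapply csub_trans; [|exact Sd].
      eapply csub_trans; [|apply csub_cadd; [exact Sa|apply csub_cadd; [exact Sb|apply csub_cpop; exact Sr]]].
      apply csub_cperm. rewrite !cdrop_cadd, !clift_cadd, !cpop_cadd, cpop_cdrop, cpop_clift0.
      cperm_pointwise. perm_count.
Qed.

(** * Subject reduction *)

Lemma typed_plug_lam_subst D G s M tau n Dl u m :
  typed G (plug D (Lam s)) (Tarr M tau) n -> mtyped Dl u M m ->
  exists n', n' < n + m /\ typed (cadd G Dl) (plug D (subst0 (lift (length D) 0 u) s)) tau n'.
Proof.
  revert G s M tau n Dl u m; induction D as [|[a b] D IH]; intros G s M tau n Dl u m H Hu; simpl in *.
  - apply typed_lam_inv in H as (G0&M'&s0&n0&Eq&->&H0&P&Sd). injection Eq; intros; subst.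
    apply mtyped_perm with (A' := G0 0) in Hu; auto.
    destruct (proj1 typed_subst _ _ _ _ H0 0 u Dl m Hu) as (n'&Le&T).
    exists n'; split; [lia|]. rewrite lift_0. unfold subst0. rewrite cdrop0, clift00 in T.
    eapply typed_weak; [exact T|]. apply csub_cadd; auto. apply csub_refl.
  - apply typed_app_inv in H as (G1&G2&G3&A&B&n1&n2&n3&H1&H2&H3&Ok&->&Sd).
    pose proof (proj2 typed_lift _ _ _ _ Hu 1 0) as Hu'.
    destruct (IH _ _ _ _ _ _ _ _ H3 Hu') as (n3'&Le&T).
    rewrite lift_lift, Nat.add_1_r in T.
    exists (S (n1 + n2 + n3')); split; [lia|].
    eapply typed_weak. apply typed_app with (A := A) (B := B); eauto.
    + eapply app_ok_perm; eauto; try apply Permutation_refl.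
      unfold cadd. change (clift 1 0 Dl 0) with (@nil ty). rewrite app_nil_r; apply Permutation_refl.
    + rewrite cpop_cadd, cpop_clift1. eapply csub_trans; [|apply csub_cadd; [exact Sd|apply csub_refl]].
      apply csub_cperm. cperm_pointwise. perm_count.
Qed.

Lemma mtyped_plug_lam_subst D s u ps G1 n1 G2 n2 :
  mtyped G1 (plug D (Lam s)) (map arrow ps) n1 -> mtyped G2 u (flat_map fst ps) n2 ->
  exists Dl m, mtyped Dl (plug D (subst0 (lift (length D) 0 u) s)) (map snd ps) m /\
    csub Dl (cadd G1 G2) /\ m <= n1 + n2.
Proof.
  revert G1 n1 G2 n2; induction ps as [|p ps IH]; intros G1 n1 G2 n2 H1 H2; simpl in *.
  - exists cempty, 0; repeat split; [constructor| |lia].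
    exists (cadd G1 G2). cperm_pointwise. apply Permutation_refl.
  - apply mtyped_cons_inv in H1 as (Ga&Gb&na&nb&Ha&Hb&E&->).
    apply mtyped_split in H2 as (Gc&Gd&nc&nd&Hc&Hd&E2&->).
    destruct (typed_plug_lam_subst _ _ _ _ _ _ _ _ _ Ha Hc) as (k&Lk&Tk).
    destruct (IH _ _ _ _ Hb Hd) as (Dl&m&TD&SD&Lm).
    exists (cadd (cadd Ga Gc) Dl), (k + m); repeat split; [eapply mtyped_cons; eauto; apply cperm_refl| |lia].
    eapply csub_trans; [apply csub_cadd; [apply csub_refl|exact SD]|].
    apply csub_cperm. cperm_pointwise. perm_count.
Qed.

Lemma mtyped_dbeta_argument D s u A B Y G1 G2 n1 n2 :
  mtyped G1 (plug D (Lam s)) A n1 -> mtyped G2 u B n2 -> app_ok A B Y ->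
  exists Dl m, mtyped Dl (plug D (subst0 (lift (length D) 0 u) s)) Y m /\
    csub Dl (cadd G1 G2) /\ m <= n1 + n2.
Proof.
  intros H1 H2 [[HY [ps [PY [PA PB]]]]|[-> _]].
  - apply mtyped_perm with (A' := map arrow ps) in H1; auto.
    destruct PB as [[_ PB]|[E1 _]].
    + apply mtyped_perm with (A' := flat_map fst ps) in H2; auto.
      destruct (mtyped_plug_lam_subst _ _ _ _ _ _ _ _ H1 H2) as (Dl&m&T&Sx&L).
      exists Dl, m; repeat split; auto. eapply mtyped_perm; eauto.
    + assert (H0 : mtyped cempty u (flat_map fst ps) 0) by (rewrite E1; constructor).
      destruct (mtyped_plug_lam_subst _ _ _ _ _ _ _ _ H1 H0) as (Dl&m&T&Sx&L).
      exists Dl, m; repeat split; [eapply mtyped_perm; eauto| |lia].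
      eapply csub_trans; [exact Sx|].
      apply csub_cadd; [apply csub_refl|exists G2; cperm_pointwise; apply Permutation_refl].
  - exists cempty, 0; repeat split; [constructor| |lia].
    exists (cadd G1 G2); cperm_pointwise; apply Permutation_refl.
Qed.

Lemma dbeta_root_subject_reduction t t' G s n : dbeta_root t t' -> typed G t s n ->
  exists n', n' < n /\ typed G t' s n'.
Proof.
  intros [D s0 u r] H.
  apply typed_app_inv in H as (G1&G2&G3&A&B&n1&n2&n3&H1&H2&H3&Ok&->&Sd).
  destruct (mtyped_dbeta_argument _ _ _ _ _ _ _ _ _ _ H1 H2 Ok) as (Dl&m&HX&SX&Lm).
  destruct (proj1 typed_subst _ _ _ _ H3 0 _ Dl m HX) as (n'&Le&T).
  rewrite cdrop0, clift00 in T. exists n'; split; [lia|].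
  eapply typed_weak; [exact T|]. eapply csub_trans; [|exact Sd].
  eapply csub_trans; [apply csub_cadd; [apply csub_refl|exact SX]|].
  apply csub_cperm; cperm_pointwise; perm_count.
Qed.

Lemma app_ok_merge A1 B1 Y1 A2 B2 Y2 : app_ok A1 B1 Y1 -> app_ok A2 B2 Y2 ->
  exists A' B', app_ok A' B' (Y1 ++ Y2) /\ msub A' (A1 ++ A2) /\ msub B' (B1 ++ B2).
Proof.
  intros [[HY1 [ps1 [PY1 [PA1 PB1]]]]|[HY1 [HA1 HB1]]] [[HY2 [ps2 [PY2 [PA2 PB2]]]]|[HY2 [HA2 HB2]]].
  - assert (PY : Permutation (map snd (ps1 ++ ps2)) (Y1 ++ Y2))
      by (rewrite map_app; apply Permutation_app; auto).
    assert (PA : Permutation (A1 ++ A2) (map arrow (ps1 ++ ps2)))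
      by (rewrite map_app; apply Permutation_app; auto).
    assert (NY : Y1 ++ Y2 <> []) by (intro E; apply app_eq_nil in E; tauto).
    destruct PB1 as [[N1 P1]|[E1 L1]]; destruct PB2 as [[N2 P2]|[E2 L2]].
    + exists (A1 ++ A2), (B1 ++ B2); repeat split; try apply msub_refl.
      left; split; auto. exists (ps1 ++ ps2); repeat split; auto.
      left; rewrite flat_map_app; split; [intro E; apply app_eq_nil in E; tauto|apply Permutation_app; auto].
    + exists (A1 ++ A2), B1; repeat split; try apply msub_refl; [|apply msub_app_l].
      left; split; auto. exists (ps1 ++ ps2); repeat split; auto.
      left; rewrite flat_map_app, E2, app_nil_r; auto.
    + exists (A1 ++ A2), B2; repeat split; try apply msub_refl; [|apply msub_app_r].
      left; split; auto. exists (ps1 ++ ps2); repeat split; auto.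
      left; rewrite flat_map_app, E1; auto.
    + exists (A1 ++ A2), B1; repeat split; try apply msub_refl; [|apply msub_app_l].
      left; split; auto. exists (ps1 ++ ps2); repeat split; auto.
      right; rewrite flat_map_app, E1, E2; auto.
  - subst. exists A1, B1; rewrite app_nil_r; repeat split; [|apply msub_app_l|apply msub_app_l].
    left; split; auto. exists ps1; auto.
  - subst. exists A2, B2; simpl; repeat split; [|apply msub_app_r|apply msub_app_r].
    left; split; auto. exists ps2; auto.
  - subst. exists A1, B1; simpl; repeat split; [|apply msub_app_l|apply msub_app_l]. right; auto.
Qed.

(* The [length A] application nodes of a multiset typing of [t(u, y.r)] merge
   into a single one: this is the weight a pi-step can give back. *)
Lemma mtyped_App_merge t u r A G n : mtyped G (App t u r) A n -> A <> [] ->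
  exists Gt Gu Gr At Bu nt nu nr, mtyped Gt t At nt /\ mtyped Gu u Bu nu /\ mtyped Gr r A nr /\
    app_ok At Bu (Gr 0) /\ csub (cadd Gt (cadd Gu (cpop Gr))) G /\ nt + nu + nr + length A <= n.
Proof.
  revert G n; induction A as [|rho A IH]; intros G n H Hne; [congruence|].
  apply mtyped_cons_inv in H as (Ga&Gb&na&nb&Ha&Hb&E&->).
  apply typed_app_inv in Ha as (G1&G2&G3&A1&B1&n1&n2&n3&H1&H2&H3&Ok&->&Sd).
  destruct A as [|rho' A'].
  - apply mtyped_nil_inv in Hb as [-> ->]. rewrite cadd_cempty_r in E.
    exists G1, G2, G3, A1, B1, n1, n2, n3; repeat split; auto.
    + apply mtyped_single; auto.
    + eapply csub_cperm_r; eauto.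
    + simpl; lia.
  - destruct (IH _ _ Hb ltac:(discriminate)) as (Gt&Gu&Gr&At&Bu&nt&nu&nr&Tt&Tu&Tr&Ok2&S2&L2).
    destruct (app_ok_merge _ _ _ _ _ _ Ok Ok2) as (A3&B3&Ok'&SA&SB).
    destruct (mtyped_msub _ _ _ _ _ (mtyped_app _ _ _ _ _ _ _ H1 Tt) SA) as (Gt'&nt'&Tt'&St'&Lt').
    destruct (mtyped_msub _ _ _ _ _ (mtyped_app _ _ _ _ _ _ _ H2 Tu) SB) as (Gu'&nu'&Tu'&Su'&Lu').
    exists Gt', Gu', (cadd G3 Gr), A3, B3, nt', nu', (n3 + nr); repeat split; auto.
    + eapply mtyped_cons; eauto. apply cperm_refl.
    + eapply csub_cperm_r; [|exact E].
      eapply csub_trans; [apply csub_cadd; [exact St'|apply csub_cadd; [exact Su'|apply csub_refl]]|].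
      eapply csub_trans; [|apply csub_cadd; [exact Sd|exact S2]].
      apply csub_cperm. cperm_pointwise. perm_count.
    + simpl in *. lia.
Qed.

Lemma pi_root_subject_reduction t t' G s n : pi_root t t' -> typed G t s n ->
  exists n', n' <= n /\ typed G t' s n'.
Proof.
  intros [t0 u r u' r'] H.
  apply typed_app_inv in H as (G1&G2&G3&A&B&n1&n2&n3&H1&H2&H3&Ok&->&Sd).
  destruct (app_ok_nonempty _ _ _ Ok) as [NA NB].
  destruct (mtyped_App_merge _ _ _ _ _ _ H1 NA) as (Gt&Gu&Gr&At&Bu&nt&nu&nr&Tt&Tu&Tr&Ok2&S2&L2).
  pose proof (proj2 typed_lift _ _ _ _ H2 1 0) as H2'.
  pose proof (proj1 typed_lift _ _ _ _ H3 1 1) as H3'.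
  assert (Ti : typed (cadd Gr (cadd (clift 1 0 G2) (cpop (clift 1 1 G3))))
                 (App r (lift 1 0 u') (lift 1 1 r')) s (S (nr + n2 + n3)))
    by (apply typed_app with (A := A) (B := B); auto).
  exists (S (nt + nu + S (nr + n2 + n3))); split.
  - destruct A; [congruence|]. simpl in L2. lia.
  - eapply typed_weak. apply typed_app with (A := At) (B := Bu); eauto.
    + eapply app_ok_perm; eauto; try apply Permutation_refl.
      unfold cadd. change (clift 1 0 G2 0) with (@nil ty). change (cpop (clift 1 1 G3) 0) with (@nil ty).
      simpl. rewrite app_nil_r; apply Permutation_refl.
    + rewrite !cpop_cadd, cpop_clift1, cpop_cpop_clift11.
      eapply csub_trans; [|exact Sd].
      eapply csub_trans; [|apply csub_cadd; [exact S2|apply csub_refl]].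
      apply csub_cperm. cperm_pointwise. perm_count.
Qed.

Lemma Acc_SN R t : Acc (fun a b => R b a) t -> SN R t.
Proof.
  intros Hacc [f [H0 Hf]].
  assert (K : forall x, Acc (fun a b => R b a) x -> forall k, f k = x -> False).
  { intros x Hx; induction Hx as [x _ IH]; intros k Ek.
    apply (IH (f (S k))) with (k := S k); [rewrite <- Ek; apply Hf|reflexivity]. }
  exact (K t Hacc 0 H0).
Qed.

Lemma SN_Acc R t : SN R t -> Acc (fun a b => R b a) t.
Proof.
  intros HSN. destruct (classic (Acc (fun a b => R b a) t)) as [HA|HA]; auto. exfalso; apply HSN.
  set (P := fun x => ~ Acc (fun a b => R b a) x).
  assert (Step : forall x, P x -> exists y, R x y /\ P y).
  { intros x Hx. apply NNPP. intro Hn. apply Hx. constructor. intros y Hy.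
    apply NNPP. intro Hy'. apply Hn. eauto. }
  assert (g : forall p : {x | P x}, {y | R (proj1_sig p) y /\ P y}).
  { intros [x Hx]. apply constructive_indefinite_description. apply Step; auto. }
  set (h := fun p : {x | P x} => exist P (proj1_sig (g p)) (proj2 (proj2_sig (g p)))).
  exists (fun n => proj1_sig (Nat.iter n h (exist P t HA))); split; [reflexivity|].
  intro n. simpl. exact (proj1 (proj2_sig (g _))).
Qed.

Definition nat_cmp (strict : bool) (a b : nat) := if strict then a < b else a <= b.

Lemma mtyped_subject_reduction_of strict t t' :
  (forall G s n, typed G t s n -> exists n', nat_cmp strict n' n /\ typed G t' s n') ->
  forall A G n, mtyped G t A n -> A <> [] -> exists n', nat_cmp strict n' n /\ mtyped G t' A n'.
Proof.
  intros HS A; induction A as [|s A IH]; intros G n H Hne; [congruence|].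
  apply mtyped_cons_inv in H as (G1&G2&n1&n2&H1&H2&E&->).
  destruct (HS _ _ _ H1) as (n1'&O1&T1).
  destruct A as [|s' A'].
  - apply mtyped_nil_inv in H2 as [-> ->]. exists (n1' + 0); split.
    + unfold nat_cmp in *; destruct strict; lia.
    + eapply mtyped_cons; eauto. constructor.
  - destruct (IH _ _ H2 ltac:(discriminate)) as (n2'&O2&T2).
    exists (n1' + n2'); split; [unfold nat_cmp in *; destruct strict; lia|]. eapply mtyped_cons; eauto.
Qed.

Lemma ctx_closure_subject_reduction (R : term -> term -> Prop) strict :
  (forall t t' G s n, R t t' -> typed G t s n -> exists n', nat_cmp strict n' n /\ typed G t' s n') ->
  forall t t' G s n, ctx_closure R t t' -> typed G t s n -> exists n', nat_cmp strict n' n /\ typed G t' s n'.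
Proof.
  intros HR t t' G s n Hs; revert G s n.
  induction Hs as [a b Hab|a b Hs IH|a b u r Hs IH|t a b r Hs IH|t u a b Hs IH]; intros G s n H.
  - eapply HR; eauto.
  - apply typed_lam_inv in H as (G0&M&s0&n0&->&->&H0&P&Sd).
    destruct (IH _ _ _ H0) as (n'&O&T). exists (S n'); split; [unfold nat_cmp in *; destruct strict; lia|].
    eapply typed_weak; [apply typed_lam; eauto|auto].
  - apply typed_app_inv in H as (G1&G2&G3&A&B&n1&n2&n3&H1&H2&H3&Ok&->&Sd).
    destruct (app_ok_nonempty _ _ _ Ok) as [NA NB].
    destruct (mtyped_subject_reduction_of _ _ _ IH _ _ _ H1 NA) as (n'&O&T).
    exists (S (n' + n2 + n3)); split; [unfold nat_cmp in *; destruct strict; lia|].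
    eapply typed_weak; [apply typed_app with (A := A) (B := B); eauto|auto].
  - apply typed_app_inv in H as (G1&G2&G3&A&B&n1&n2&n3&H1&H2&H3&Ok&->&Sd).
    destruct (app_ok_nonempty _ _ _ Ok) as [NA NB].
    destruct (mtyped_subject_reduction_of _ _ _ IH _ _ _ H2 NB) as (n'&O&T).
    exists (S (n1 + n' + n3)); split; [unfold nat_cmp in *; destruct strict; lia|].
    eapply typed_weak; [apply typed_app with (A := A) (B := B); eauto|auto].
  - apply typed_app_inv in H as (G1&G2&G3&A&B&n1&n2&n3&H1&H2&H3&Ok&->&Sd).
    destruct (IH _ _ _ H3) as (n'&O&T).
    exists (S (n1 + n2 + n')); split; [unfold nat_cmp in *; destruct strict; lia|].
    eapply typed_weak; [apply typed_app with (A := A) (B := B); eauto|auto].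
Qed.

Lemma beta_root_dbeta_root t t' : beta_root t t' -> dbeta_root t t'.
Proof.
  intros [t0 u r].
  pose proof (dbeta_rule [] t0 u r) as H. simpl in H. rewrite lift_0 in H. exact H.
Qed.

Lemma dbeta_subject_reduction t t' G s n : dbeta_step t t' -> typed G t s n ->
  exists n', n' < n /\ typed G t' s n'.
Proof. apply (ctx_closure_subject_reduction _ true), dbeta_root_subject_reduction. Qed.

Lemma beta_subject_reduction t t' G s n : beta_step t t' -> typed G t s n ->
  exists n', n' < n /\ typed G t' s n'.
Proof.
  apply (ctx_closure_subject_reduction _ true).
  intros; eapply dbeta_root_subject_reduction; eauto. apply beta_root_dbeta_root; auto.
Qed.

Lemma pi_subject_reduction t t' G s n : pi_step t t' -> typed G t s n ->
  exists n', n' <= n /\ typed G t' s n'.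
Proof. apply (ctx_closure_subject_reduction _ false), pi_root_subject_reduction. Qed.

(* The function position is counted twice, so that moving the continuation
   [r'] of [t(u, x.r)(u', y.r')] inside [r] makes the weight decrease. *)
Fixpoint pi_weight (t : term) : nat :=
  match t with
  | Var _ => 1
  | Lam a => S (pi_weight a)
  | App a b r => 2 * pi_weight a + pi_weight b + pi_weight r + 1
  end.

Lemma pi_weight_lift t k c : pi_weight (lift k c t) = pi_weight t.
Proof.
  revert c; induction t; intros; simpl; try (destruct (n <? c); reflexivity);
    rewrite ?IHt, ?IHt1, ?IHt2, ?IHt3; auto.
Qed.

Lemma pi_step_weight t t' : pi_step t t' -> pi_weight t' < pi_weight t.
Proof.
  induction 1 as [a b H| | | |]; simpl; try lia.
  destruct H; simpl. rewrite !pi_weight_lift. lia.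
Qed.

Lemma typable_SN_dbeta t : typable t -> SN dbeta_step t.
Proof.
  intros (G&s&n&H). apply Acc_SN. revert G t s H.
  induction n as [n IH] using lt_wf_ind; intros G t s H.
  constructor; intros t' Hs. destruct (dbeta_subject_reduction _ _ _ _ _ Hs H) as (n'&L&T). eauto.
Qed.

(* Lexicographic induction on the weight of a derivation and [pi_weight]. *)
Lemma typable_SN_beta_pi t : typable t -> SN (union_rel beta_step pi_step) t.
Proof.
  intros (G&s&n&H). apply Acc_SN.
  remember (pi_weight t) as p eqn:Ep. revert G t s p H Ep.
  induction n as [n IH] using lt_wf_ind; intros G t s p; revert G t s.
  induction p as [p IHp] using lt_wf_ind; intros G t s H Ep.
  constructor; intros t' [Hs|Hs].
  - destruct (beta_subject_reduction _ _ _ _ _ Hs H) as (n'&L&T). eapply IH; eauto.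
  - destruct (pi_subject_reduction _ _ _ _ _ Hs H) as (n'&L&T). pose proof (pi_step_weight _ _ Hs).
    destruct (Nat.eq_dec n' n) as [->|].
    + eapply (IHp (pi_weight t')); [lia|eauto|reflexivity].
    + eapply (IH n'); [lia|eauto|reflexivity].
Qed.

(** * Subject expansion *)

Lemma typed_plug_lam_subst_inv D G s u tau n :
  typed G (plug D (subst0 (lift (length D) 0 u) s)) tau n ->
  exists G' Dl M n' m, typed G' (plug D (Lam s)) (Tarr M tau) n' /\ mtyped Dl u M m /\ csub (cadd G' Dl) G.
Proof.
  revert G s u tau n; induction D as [|[a b] D IH]; intros G s u tau n H; simpl in *.
  - rewrite lift_0 in H. unfold subst0 in H. apply typed_subst_inv in H as (Gt&D0&nt&m&Tt&XD&Sx).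
    exists (cpop Gt), D0, (Gt 0), (S nt), m; repeat split; auto.
    + apply typed_lam; auto.
    + rewrite cdrop0, clift00 in Sx; auto.
  - apply typed_app_inv in H as (G1&G2&G3&A&B&n1&n2&n3&H1&H2&H3&Ok&->&Sd).
    rewrite <- Nat.add_1_r, <- lift_lift in H3.
    destruct (IH _ _ _ _ _ H3) as (G3'&Dl'&M&n'&m&T3&Tu&S3).
    apply mtyped_lift_inv in Tu as (D0&Tu&SD0).
    pose proof (csub_msub_at _ _ 0 S3) as Sub. destruct Sub as [J0 PJ0]. unfold cadd in PJ0 at 1.
    exists (cadd G1 (cadd G2 (cpop (cadd G3' (cvar0 (Dl' 0 ++ J0)))))), D0, M, (S (n1 + n2 + n')), m;
      repeat split; auto.
    + apply typed_app with (A := A) (B := B); auto. apply typed_cadd_cvar0; auto.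
      eapply app_ok_perm; eauto; try apply Permutation_refl. rewrite cadd_cvar0_0.
      rewrite <- app_assoc in PJ0. apply Permutation_sym; exact PJ0.
    + rewrite cpop_cadd_cvar0. eapply csub_trans; [|exact Sd].
      assert (S4 : csub (cadd G3' (clift 1 0 D0)) G3).
      { eapply csub_trans; [|exact S3]. apply csub_cadd; [apply csub_refl|auto]. }
      apply csub_cpop in S4. rewrite cpop_cadd, cpop_clift1 in S4.
      eapply csub_trans; [|apply csub_cadd; [apply csub_refl|apply csub_cadd; [apply csub_refl|exact S4]]].
      apply csub_cperm; cperm_pointwise; perm_count.
Qed.

Lemma mtyped_plug_lam_subst_inv D s u L Dl m :
  mtyped Dl (plug D (subst0 (lift (length D) 0 u) s)) L m ->
  exists ps G1 n1 G2 n2, map snd ps = L /\ mtyped G1 (plug D (Lam s)) (map arrow ps) n1 /\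
    mtyped G2 u (flat_map fst ps) n2.
Proof.
  revert Dl m; induction L as [|tau L IH]; intros Dl m H.
  - exists [], cempty, 0, cempty, 0; repeat split; constructor.
  - apply mtyped_cons_inv in H as (Ga&Gb&na&nb&Ha&Hb&_&_).
    destruct (typed_plug_lam_subst_inv _ _ _ _ _ _ Ha) as (G'&Dl'&M&n'&m'&T&Tu&_).
    destruct (IH _ _ Hb) as (ps&G1&n1&G2&n2&E&T1&T2).
    exists ((M, tau) :: ps), (cadd G' G1), (n' + n1), (cadd Dl' G2), (m' + n2); repeat split.
    + simpl; f_equal; auto.
    + simpl. eapply mtyped_cons; eauto. apply cperm_refl.
    + simpl. apply mtyped_app; auto.
Qed.

Lemma typed_app_of_arrows t u r ps G1 n1 G2 n2 Gr s nr :
  mtyped G1 t (map arrow ps) n1 -> mtyped G2 u (flat_map fst ps) n2 -> typable t -> typable u ->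
  typed Gr r s nr -> Permutation (map snd ps) (Gr 0) -> exists G n, typed G (App t u r) s n.
Proof.
  intros H1 H2 (Gt&st&nt&Tt) (Gu&su&nu&Tu) Hr P.
  destruct ps as [|p ps].
  - apply Permutation_nil in P.
    do 2 eexists. apply typed_app with (A := [st]) (B := [su]);
      [apply mtyped_single; eauto|apply mtyped_single; eauto|eauto|].
    right; rewrite P; auto.
  - assert (NY : Gr 0 <> []) by (intro E; rewrite E in P; apply Permutation_sym, Permutation_nil in P; discriminate).
    destruct (flat_map fst (p :: ps)) as [|b B] eqn:EB.
    + do 2 eexists. apply typed_app with (A := map arrow (p :: ps)) (B := [su]);
        [eauto|apply mtyped_single; eauto|eauto|].
      left; split; auto. exists (p :: ps); split; [exact P|split; [apply Permutation_refl|]].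
      right; split; auto.
    + do 2 eexists. apply typed_app with (A := map arrow (p :: ps)) (B := b :: B); eauto.
      left; split; auto. exists (p :: ps); split; [exact P|split; [apply Permutation_refl|]].
      left; rewrite EB; split; [discriminate|apply Permutation_refl].
Qed.

(* Expansion holds only when the erased parts of the redex are typable. *)
Lemma dbeta_root_subject_expansion D s u r G sg n :
  typed G (subst0 (plug D (subst0 (lift (length D) 0 u) s)) r) sg n ->
  typable (plug D (Lam s)) -> typable u -> exists G' n', typed G' (App (plug D (Lam s)) u r) sg n'.
Proof.
  intros H TT TU. unfold subst0 at 1 in H. apply typed_subst_inv in H as (Gr&D0&nr&m&Tr&XD&_).
  destruct (mtyped_plug_lam_subst_inv _ _ _ _ _ _ XD) as (ps&G1&n1&G2&n2&E&T1&T2).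
  eapply typed_app_of_arrows; eauto. rewrite E; apply Permutation_refl.
Qed.

Lemma app_ok_msub A B Y Y' : app_ok A B Y -> msub Y' Y ->
  exists A' B', app_ok A' B' Y' /\ msub A' A /\ msub B' B.
Proof.
  intros Ok [K P]. destruct (app_ok_nonempty _ _ _ Ok) as [NA NB].
  destruct A as [|a A]; [congruence|]. destruct B as [|b B]; [congruence|].
  destruct Y' as [|y Y'].
  - exists [a], [b]; repeat split; [right; auto|exists A|exists B]; apply Permutation_refl.
  - destruct Ok as [[HY [ps [PY [PA PB]]]]|[-> _]].
    2:{ apply Permutation_sym, Permutation_nil in P. discriminate. }
    assert (P2 : Permutation ((y :: Y') ++ K) (map snd ps))
      by (eapply perm_trans; [exact P|apply Permutation_sym, PY]).
    apply Permutation_map_inv in P2 as (l3&E3&P3).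
    symmetry in E3. apply map_eq_app in E3 as (l1&l2&->&E1&E2).
    assert (SA : msub (map arrow l1) (a :: A)).
    { exists (map arrow l2). rewrite <- map_app. apply Permutation_sym.
      eapply perm_trans; [exact PA|]. apply Permutation_map; auto. }
    assert (PC : Permutation (flat_map fst ps) (flat_map fst l1 ++ flat_map fst l2))
      by (rewrite <- flat_map_app; apply Permutation_flat_map; auto).
    destruct (flat_map fst l1) as [|c C] eqn:EC.
    + exists (map arrow l1), [b]; repeat split; [|auto|exists B; apply Permutation_refl].
      left; split; [discriminate|]. exists l1; rewrite E1; repeat split; [apply Permutation_refl..|].
      right; split; auto.
    + destruct PB as [[_ PB]|[EC2 _]].
      * exists (map arrow l1), (c :: C); repeat split; auto.
        -- left; split; [discriminate|]. exists l1; rewrite E1, EC; repeat split; [apply Permutation_refl..|].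
           left; split; [discriminate|apply Permutation_refl].
        -- exists (flat_map fst l2). apply Permutation_sym. eapply perm_trans; eauto.
      * rewrite EC2 in PC. apply Permutation_nil in PC. discriminate.
Qed.

Lemma typed_app_of_msub t u r A B Y Gt Gu nt nu Gr s nr :
  mtyped Gt t A nt -> mtyped Gu u B nu -> app_ok A B Y -> typed Gr r s nr -> msub (Gr 0) Y ->
  exists G n, typed G (App t u r) s n.
Proof.
  intros Ht Hu Ok Hr Sub.
  destruct (app_ok_msub _ _ _ _ Ok Sub) as (A'&B'&Ok'&SA&SB).
  destruct (mtyped_msub _ _ _ _ _ Ht SA) as (Gt'&nt'&Tt&_).
  destruct (mtyped_msub _ _ _ _ _ Hu SB) as (Gu'&nu'&Tu&_).
  do 2 eexists. apply typed_app with (A := A') (B := B'); eauto.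
Qed.

Lemma mtyped_app_of_msub t u r A B Y Gt Gu nt nu L Gr nr :
  mtyped Gt t A nt -> mtyped Gu u B nu -> app_ok A B Y -> mtyped Gr r L nr -> msub (Gr 0) Y ->
  exists G n, mtyped G (App t u r) L n.
Proof.
  intros Ht Hu Ok; revert Gr nr; induction L as [|rho L IH]; intros Gr nr Hr Sub.
  - exists cempty, 0; constructor.
  - apply mtyped_cons_inv in Hr as (Ga&Gb&na&nb&Ha&Hb&E&->).
    assert (Sa : msub (Ga 0) Y)
      by (eapply msub_trans; [|exact Sub]; eapply msub_perm; [apply msub_app_l|apply (E 0)]).
    assert (Sb : msub (Gb 0) Y)
      by (eapply msub_trans; [|exact Sub]; eapply msub_perm; [apply msub_app_r|apply (E 0)]).
    destruct (typed_app_of_msub _ _ _ _ _ _ _ _ _ _ _ _ _ Ht Hu Ok Ha Sa) as (G1&n1&T1).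
    destruct (IH _ _ Hb Sb) as (G2&n2&T2).
    exists (cadd G1 G2), (n1 + n2). eapply mtyped_cons; eauto. apply cperm_refl.
Qed.

Lemma pi_root_subject_expansion t t' G s n : pi_root t t' -> typed G t' s n ->
  exists G' n', typed G' t s n'.
Proof.
  intros [t0 u r u' r'] H.
  apply typed_app_inv in H as (Gt&Gu&Gi&At&Bu&nt&nu&ni&Ht&Hu&Hi&Ok1&_&_).
  apply typed_app_inv in Hi as (Gr&G2'&G3'&A&B&nr&n2&n3&Hr&H2&H3&Ok2&_&Si).
  apply mtyped_lift_inv in H2 as (G2&T2&_).
  apply typed_lift_inv in H3 as (G3&T3&S3).
  pose proof (csub_msub_at _ _ 0 S3) as Sub. change (clift 1 1 G3 0) with (G3 0) in Sub.
  destruct Sub as [J PJ].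
  assert (SubR : msub (Gr 0) (Gi 0)).
  { eapply msub_trans; [|exact (csub_msub_at _ _ 0 Si)]. apply msub_app_l. }
  destruct (mtyped_app_of_msub _ _ _ _ _ _ _ _ _ _ _ _ _ Ht Hu Ok1 Hr SubR) as (Ga&na&Ta).
  do 2 eexists. apply typed_app with (A := A) (B := B) (G3 := cadd G3 (cvar0 J)); eauto.
  - apply typed_cadd_cvar0; eauto.
  - eapply app_ok_perm; [exact Ok2| apply Permutation_refl| apply Permutation_refl|].
    rewrite cadd_cvar0_0; apply Permutation_sym; auto.
Qed.

(** * Inductive strong normalisation *)

Inductive hctx : Type := Hole | HL (H : hctx) (b r : term) | HR (a b : term) (H : hctx).

Fixpoint fill (H : hctx) (x : term) : term :=
  match H with Hole => x | HL H b r => App (fill H x) b r | HR a b H => App a b (fill H x) end.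

Definition dredex D s u r := App (plug D (Lam s)) u r.
Definition dcontr D s u r := subst0 (plug D (subst0 (lift (length D) 0 u) s)) r.

(* Neutral
   terms are the [Var]-headed spines [x(b1, y1. ... (bn, yn. r))]; a hole to
   the right of [a(b, y. _)] only counts as a head position when [a] is
   neutral, as otherwise the whole term is itself a distant redex. *)
Inductive isn_dbeta : term -> Prop :=
| isn_dbeta_var x : isn_dbeta (Var x)
| isn_dbeta_lam t : isn_dbeta t -> isn_dbeta (Lam t)
| isn_dbeta_neutral a b r : neutral a -> isn_dbeta b -> isn_dbeta r -> isn_dbeta (App a b r)
| isn_dbeta_redex H D s u r : neutral_hctx H -> isn_dbeta (fill H (dcontr D s u r)) ->
    isn_dbeta (plug D (Lam s)) -> isn_dbeta u -> isn_dbeta (fill H (dredex D s u r))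
with neutral : term -> Prop :=
| neutral_var x : neutral (Var x)
| neutral_app a b r : neutral a -> isn_dbeta b -> neutral r -> neutral (App a b r)
with neutral_hctx : hctx -> Prop :=
| neutral_hctx_hole : neutral_hctx Hole
| neutral_hctx_left H b r : neutral_hctx H -> neutral_hctx (HL H b r)
| neutral_hctx_right a b H : neutral a -> neutral_hctx H -> neutral_hctx (HR a b H).

Scheme isn_dbeta_ind2 := Induction for isn_dbeta Sort Prop
with neutral_ind2 := Induction for neutral Sort Prop
with neutral_hctx_ind2 := Induction for neutral_hctx Sort Prop.
Combined Scheme isn_dbeta_mutind from isn_dbeta_ind2, neutral_ind2, neutral_hctx_ind2.

Definition fully_typable a := forall s, exists G n, typed G a s n.

Fixpoint hctx_fully_typable (H : hctx) : Prop :=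
  match H with
  | Hole => True
  | HL H _ _ => hctx_fully_typable H
  | HR a _ H => fully_typable a /\ hctx_fully_typable H
  end.

Lemma fully_typable_mtyped a L : fully_typable a -> exists G n, mtyped G a L n.
Proof.
  intros F; induction L as [|s L IH].
  - exists cempty, 0; constructor.
  - destruct (F s) as (G1&n1&T1). destruct IH as (G2&n2&T2).
    exists (cadd G1 G2), (n1 + n2); eapply mtyped_cons; eauto; apply cperm_refl.
Qed.

Lemma typed_app_fully_typable a b r G3 s n3 : fully_typable a -> typable b -> typed G3 r s n3 ->
  exists G n, typed G (App a b r) s n.
Proof.
  intros Fa Tb Tr.
  set (ps := map (fun tau => (@nil ty, tau)) (G3 0)).
  destruct (fully_typable_mtyped a (map arrow ps) Fa) as (Ga&na&Ta).
  assert (Eps : forall L : list ty, flat_map fst (map (fun tau => (@nil ty, tau)) L) = [])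
    by (induction L; simpl; auto).
  eapply typed_app_of_arrows; eauto.
  - unfold ps; rewrite Eps; constructor.
  - destruct (Fa Tbase) as (G&n&T). red; eauto.
  - unfold ps. rewrite map_map. simpl. rewrite map_id. apply Permutation_refl.
Qed.

Lemma mtyped_subject_expansion_of x y :
  (forall G s n, typed G y s n -> exists G' n', typed G' x s n') ->
  forall A G n, mtyped G y A n -> exists G' n', mtyped G' x A n'.
Proof.
  intros HS A; induction A as [|s A IH]; intros G n H.
  - exists cempty, 0; constructor.
  - apply mtyped_cons_inv in H as (G1&G2&n1&n2&H1&H2&_&_).
    destruct (HS _ _ _ H1) as (G1'&n1'&T1). destruct (IH _ _ H2) as (G2'&n2'&T2).
    exists (cadd G1' G2'), (n1' + n2'); eapply mtyped_cons; eauto; apply cperm_refl.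
Qed.

Lemma hctx_subject_expansion H x y : hctx_fully_typable H ->
  (forall G s n, typed G y s n -> exists G' n', typed G' x s n') ->
  forall G s n, typed G (fill H y) s n -> exists G' n', typed G' (fill H x) s n'.
Proof.
  intros HF HS; induction H as [|H IH b r|a b H IH]; intros G s n T; simpl in *.
  - eauto.
  - apply typed_app_inv in T as (G1&G2&G3&A&B&n1&n2&n3&H1&H2&H3&Ok&_&_).
    destruct (mtyped_subject_expansion_of _ _ (IH HF) _ _ _ H1) as (G1'&n1'&T1).
    do 2 eexists. apply typed_app with (A := A) (B := B); eauto.
  - destruct HF as [Fa HF].
    apply typed_app_inv in T as (G1&G2&G3&A&B&n1&n2&n3&H1&H2&H3&Ok&_&_).
    destruct (IH HF _ _ _ H3) as (G3'&n3'&T3).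
    destruct (app_ok_nonempty _ _ _ Ok) as [_ NB].
    destruct B as [|sb B]; [congruence|].
    destruct (mtyped_in _ _ _ _ sb H2 (or_introl eq_refl)) as (Gb&nb&Tb).
    eapply typed_app_fully_typable; eauto. red; eauto.
Qed.

Lemma isn_dbeta_typable :
  (forall t, isn_dbeta t -> typable t) /\ (forall t, neutral t -> fully_typable t) /\
  (forall H, neutral_hctx H -> hctx_fully_typable H).
Proof.
  apply isn_dbeta_mutind.
  - intros x. exists (csing x Tbase), Tbase, 1; constructor.
  - intros t _ (G&s&n&T). exists (cpop G), (Tarr (G 0) s), (S n). apply typed_lam; auto.
  - intros a b r _ Fa _ Tb _ (G&s&n&T).
    destruct (typed_app_fully_typable _ _ _ _ _ _ Fa Tb T) as (G'&n'&T'). red; eauto.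
  - intros H D s u r _ HF _ (G&s0&n&T) _ T1 _ T2.
    destruct (hctx_subject_expansion H (dredex D s u r) (dcontr D s u r) HF
      (fun G0 s1 n0 T0 => dbeta_root_subject_expansion D s u r G0 s1 n0 T0 T1 T2) _ _ _ T) as (G'&n'&T').
    red; eauto.
  - intros x s; exists (csing x s), 1; constructor.
  - intros a b r _ Fa _ Tb _ Fr s. destruct (Fr s) as (G3&n3&T3). eapply typed_app_fully_typable; eauto.
  - exact I.
  - intros H b r _ HF; exact HF.
  - intros a b H _ Fa _ HF; split; auto.
Qed.

Inductive isn_beta_pi : term -> Prop :=
| isn_bp_var x : isn_beta_pi (Var x)
| isn_bp_lam t : isn_beta_pi t -> isn_beta_pi (Lam t)
| isn_bp_var_app x b r : isn_beta_pi b -> isn_beta_pi r -> isn_beta_pi (App (Var x) b r)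
| isn_bp_beta s u r : isn_beta_pi (subst0 (subst0 u s) r) -> isn_beta_pi (Lam s) -> isn_beta_pi u ->
    isn_beta_pi (App (Lam s) u r)
| isn_bp_pi t u r u' r' : isn_beta_pi (App t u (App r (lift 1 0 u') (lift 1 1 r'))) ->
    isn_beta_pi (App (App t u r) u' r').

Lemma isn_beta_pi_typable t : isn_beta_pi t -> typable t.
Proof.
  induction 1 as [x|t _ (G&s&n&T)|x b r _ Tb _ (G&s&n&T)|s u r _ (G&s0&n&T) _ Ts _ Tu|t u r u' r' _ (G&s0&n&T)].
  - exists (csing x Tbase), Tbase, 1; constructor.
  - exists (cpop G), (Tarr (G 0) s), (S n). apply typed_lam; auto.
  - assert (F : fully_typable (Var x)) by (intros s'; exists (csing x s'), 1; constructor).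
    destruct (typed_app_fully_typable _ _ _ _ _ _ F Tb T) as (G'&n'&T'). red; eauto.
  - assert (T' : typed G (subst0 (plug [] (subst0 (lift (length (@nil (term * term))) 0 u) s)) r) s0 n)
      by (simpl; rewrite lift_0; auto).
    destruct (dbeta_root_subject_expansion [] s u r G s0 n T' Ts Tu) as (G'&n'&T''). red; eauto.
  - destruct (pi_root_subject_expansion _ _ _ _ _ (pi_rule t u r u' r') T) as (G'&n'&T'). red; eauto.
Qed.

(** * Strongly normalising terms are inductively strongly normalising *)

Definition subterm1 (a t : term) : Prop :=
  t = Lam a \/ (exists u r, t = App a u r) \/ (exists x r, t = App x a r) \/ (exists x u, t = App x u a).

Definition red_or_subterm (R : term -> term -> Prop) (a t : term) : Prop := R t a \/ subterm1 a t.

Definition subterm_compatible (R : term -> term -> Prop) :=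
  forall s t a, subterm1 s t -> R s a -> exists t', R t t' /\ subterm1 a t'.

Lemma subterm1_wf : well_founded subterm1.
Proof.
  intro t; induction t as [x|t IH|t IHt u IHu r IHr]; constructor;
    intros a [E|[(u'&r'&E)|[(x'&r'&E)|(x'&u'&E)]]]; try discriminate; injection E; intros; subst; assumption.
Qed.

Lemma ctx_closure_subterm_compatible R : subterm_compatible (ctx_closure R).
Proof.
  intros s t a [->|[(u&r&->)|[(x&r&->)|(x&u&->)]]] Hs.
  - exists (Lam a); split; [apply cc_lam; auto|left; auto].
  - exists (App a u r); split; [apply cc_app1; auto|right; left; eauto].
  - exists (App x a r); split; [apply cc_app2; auto|right; right; left; eauto].
  - exists (App x u a); split; [apply cc_app3; auto|right; right; right; eauto].
Qed.

Lemma beta_pi_subterm_compatible : subterm_compatible (union_rel beta_step pi_step).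
Proof.
  intros s t a H [Hs|Hs];
    destruct (ctx_closure_subterm_compatible _ _ _ _ H Hs) as (t'&?&?); exists t'; split; auto.
  - left; auto.
  - right; auto.
Qed.

Lemma subterm_rt_compatible R : subterm_compatible R ->
  forall s t a, clos_refl_trans _ subterm1 s t -> R s a ->
  exists t', R t t' /\ clos_refl_trans _ subterm1 a t'.
Proof.
  intros C s t a H; revert a; induction H as [s t H|s|s m t H1 IH1 H2 IH2]; intros a Hs.
  - destruct (C _ _ _ H Hs) as (t'&?&?). exists t'; split; auto. apply rt_step; auto.
  - exists a; split; auto. apply rt_refl.
  - destruct (IH1 _ Hs) as (m'&Hm&Sm). destruct (IH2 _ Hm) as (t'&Ht&St).
    exists t'; split; auto. eapply rt_trans; eauto.
Qed.

(* A reduction from a subterm of [t] lifts to a reduction from [t], so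
   reductions interleaved with subterm steps still terminate. *)
Lemma Acc_red_or_subterm R : subterm_compatible R ->
  forall t, Acc (fun a b => R b a) t ->
  forall s, clos_refl_trans _ subterm1 s t -> Acc (red_or_subterm R) s.
Proof.
  intros C t Hacc; induction Hacc as [t _ IHt].
  intros s; induction s as [s IHs] using (well_founded_ind subterm1_wf); intros Hst.
  constructor; intros a [Hs|Hsub].
  - destruct (subterm_rt_compatible R C _ _ _ Hst Hs) as (t'&Ht'&St'). eapply IHt; eauto.
  - apply IHs; auto. eapply rt_trans; [apply rt_step|]; eauto.
Qed.

Lemma SN_Acc_red_or_subterm R t : subterm_compatible R -> SN R t ->
  Acc (clos_trans _ (red_or_subterm R)) t.
Proof.
  intros C H. apply Acc_clos_trans. apply (Acc_red_or_subterm R C t (SN_Acc R t H)). apply rt_refl.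
Qed.

Lemma subterm_t_red_or_subterm R a b : clos_trans _ subterm1 a b -> clos_trans _ (red_or_subterm R) a b.
Proof. induction 1; [apply t_step; right; auto|eapply t_trans; eauto]. Qed.

Lemma subterm_t_rt a b c : clos_trans _ subterm1 a b -> clos_refl_trans _ subterm1 b c ->
  clos_trans _ subterm1 a c.
Proof.
  intros H1 H2; revert a H1; induction H2 as [b c H|b|b m c _ IH1 _ IH2]; intros a H1.
  - eapply t_trans; [exact H1|apply t_step; auto].
  - auto.
  - apply IH2, IH1, H1.
Qed.

Lemma fill_ctx_closure R H x y : ctx_closure R x y -> ctx_closure R (fill H x) (fill H y).
Proof. intros Hs; induction H; simpl; auto; [apply cc_app1|apply cc_app3]; auto. Qed.

Lemma fill_subterm_rt H x : clos_refl_trans _ subterm1 x (fill H x).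
Proof.
  induction H as [|H IH b r|a b H IH]; simpl.
  - apply rt_refl.
  - eapply rt_trans; [exact IH|]. apply rt_step. right; left; eauto.
  - eapply rt_trans; [exact IH|]. apply rt_step. right; right; right; eauto.
Qed.

Lemma dbeta_head_cases a : (forall s, clos_trans _ subterm1 s a -> isn_dbeta s) ->
  (exists D s, a = plug D (Lam s)) \/ neutral a \/
  (exists H D s u r, neutral_hctx H /\ a = fill H (dredex D s u r)).
Proof.
  induction a as [x|s IH|a1 IH1 b1 IH2 r1 IH3]; intros Hs.
  - right; left; constructor.
  - left; exists [], s; reflexivity.
  - assert (S1 : forall s, clos_trans _ subterm1 s a1 -> isn_dbeta s)
      by (intros s Hs'; apply Hs; eapply t_trans; [exact Hs'|apply t_step; right; left; eauto]).
    assert (S3 : forall s, clos_trans _ subterm1 s r1 -> isn_dbeta s)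
      by (intros s Hs'; apply Hs; eapply t_trans; [exact Hs'|apply t_step; right; right; right; eauto]).
    destruct (IH1 S1) as [(D&s&->)|[N1|(H&D&s&u&r&HH&->)]].
    + right; right. exists Hole, D, s, b1, r1; split; [constructor|reflexivity].
    + destruct (IH3 S3) as [(D&s&->)|[N3|(H&D&s&u&r&HH&->)]].
      * left. exists ((a1, b1) :: D), s; reflexivity.
      * right; left. constructor; auto. apply Hs. apply t_step; right; right; left; eauto.
      * right; right. exists (HR a1 b1 H), D, s, u, r; split; [constructor; auto|reflexivity].
    + right; right. exists (HL H b1 r1), D, s, u, r; split; [constructor; auto|reflexivity].
Qed.

Lemma Acc_isn_dbeta t : Acc (clos_trans _ (red_or_subterm dbeta_step)) t -> isn_dbeta t.
Proof.
  intros Hacc; induction Hacc as [t _ IH].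
  assert (Sub : forall s, clos_trans _ subterm1 s t -> isn_dbeta s)
    by (intros s Hs; apply IH, subterm_t_red_or_subterm, Hs).
  assert (Red : forall s, dbeta_step t s -> isn_dbeta s) by (intros s Hs; apply IH, t_step; left; auto).
  destruct t as [x|a|a b r].
  - constructor.
  - constructor. apply Sub, t_step. left; auto.
  - assert (Sa : forall s, clos_trans _ subterm1 s a -> isn_dbeta s)
      by (intros s Hs; apply Sub; eapply t_trans; [exact Hs|apply t_step; right; left; eauto]).
    assert (Sb : isn_dbeta b) by (apply Sub, t_step; right; right; left; eauto).
    assert (Sr : isn_dbeta r) by (apply Sub, t_step; right; right; right; eauto).
    destruct (dbeta_head_cases a Sa) as [(D&s&->)|[Hne|(H&D&s&u&r0&HH&->)]].
    + change (App (plug D (Lam s)) b r) with (fill Hole (dredex D s b r)).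
      apply isn_dbeta_redex; [constructor| | |auto].
      * apply Red. apply cc_root. apply dbeta_rule.
      * apply Sub, t_step; right; left; eauto.
    + apply isn_dbeta_neutral; auto.
    + change (App (fill H (dredex D s u r0)) b r) with (fill (HL H b r) (dredex D s u r0)).
      apply isn_dbeta_redex; [constructor; auto| | |].
      * apply Red, (fill_ctx_closure _ (HL H b r)), cc_root. apply dbeta_rule.
      * apply Sa. eapply subterm_t_rt; [|apply fill_subterm_rt]. unfold dredex. apply t_step; right; left; eauto.
      * apply Sa. eapply subterm_t_rt; [|apply fill_subterm_rt]. unfold dredex. apply t_step; right; right; left; eauto.
Qed.

Lemma Acc_isn_beta_pi t : Acc (clos_trans _ (red_or_subterm (union_rel beta_step pi_step))) t ->
  isn_beta_pi t.
Proof.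
  intros Hacc; induction Hacc as [t _ IH].
  assert (Sub : forall s, clos_trans _ subterm1 s t -> isn_beta_pi s)
    by (intros s Hs; apply IH, subterm_t_red_or_subterm, Hs).
  assert (Red : forall s, union_rel beta_step pi_step t s -> isn_beta_pi s)
    by (intros s Hs; apply IH, t_step; left; auto).
  destruct t as [x|a|a b r].
  - constructor.
  - constructor. apply Sub, t_step. left; auto.
  - assert (Sb : isn_beta_pi b) by (apply Sub, t_step; right; right; left; eauto).
    assert (Sr : isn_beta_pi r) by (apply Sub, t_step; right; right; right; eauto).
    destruct a as [x|s|t0 u0 r0].
    + constructor; auto.
    + apply isn_bp_beta; auto.
      * apply Red. left. apply cc_root. apply beta_rule.
      * apply Sub, t_step; right; left; eauto.
    + apply isn_bp_pi. apply Red. right. apply cc_root. apply pi_rule.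
Qed.

Theorem mainTheorem20 : forall t : term,
  SN dbeta_step t <-> SN (union_rel beta_step pi_step) t.
Proof.
  intros t; split; intros H.
  - apply typable_SN_beta_pi, (proj1 isn_dbeta_typable), Acc_isn_dbeta.
    apply SN_Acc_red_or_subterm; [apply ctx_closure_subterm_compatible|exact H].
  - apply typable_SN_dbeta, isn_beta_pi_typable, Acc_isn_beta_pi.
    apply SN_Acc_red_or_subterm; [apply beta_pi_subterm_compatible|exact H].
Qed.
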